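(* Let $a,b,c,d\in K$ with $c\in\Delta(a)$ and $d\in\Delta(b)$. If $(T-b)^{-1}$ is defined at $a$, then $(T-d)^{-1}$ is defined at $c$.
   Context: Let $K$ be a skew field, $K^*=K\setminus\{0\}$, $\sigma\colon K\to K$ a ring endomorphism and $\delta\colon K\to K$ a $\sigma$-derivation. $K[T;\sigma,\delta]$ is the skew polynomial ring with $Ta=\sigma(a)T+\delta(a)$. The $(\sigma,\delta)$-action of $K^*$ on $K$ is ${}^{b}a=\sigma(b)ab^{-1}+\delta(b)b^{-1}$; $\Delta(a)=\{{}^{b}a:b\in K^*\}$. For $P\in K[T;\sigma,\delta]$ and $a\in K$, $P(a)$ is the unique element of $K$ with $P(T)-P(a)\in K[T;\sigma,\delta](T-a)$. For a set $Z$ with a $K^*$-action, the skew product of functions $Z\to K$ is $(f\diamond g)(z)=f({}^{g(z)}z)g(z)$ if $g(z)\neq0$, $0$ otherwise; $f$ is skew invertible if some $g$ satisfies $f\diamond g=g\diamond f=1$. $K(T;\sigma,\delta)$ is the division ring of left fractions of $K[T;\sigma,\delta]$; each $f$ has a unique minimal representation $P(T)^{-1}Q(T)$ with $P$ monic of least degree; $f$ is defined at $a$ if the function $\Delta(a)\to K$, $c\mapsto P(c)$, is skew invertible. *)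

From HB Require Import structures.
From mathcomp Require Import all_boot all_order all_algebra.
From Stdlib Require Import ClassicalEpsilon.
Set Implicit Arguments.
Unset Strict Implicit.
Unset Printing Implicit Defensive.
Import GRing.Theory.
Local Open Scope ring_scope.

Section SkewPoly.
Variable (K : unitRingType) (sigma delta : K -> K).

(* A skew polynomial  sum_i p_i T^i  (coefficients on the left) is stored as the
   coefficient list of an element of {poly K}; only its additive structure and
   left scaling are used. *)

(* left multiplication by T:  T * (sum a_i T^i) = sum (sigma(a_i) T^(i+1) + delta(a_i) T^i) *)
Definition mulT (p : {poly K}) : {poly K} := map_poly sigma p * 'X + map_poly delta p.

Definition spmul (p q : {poly K}) : {poly K} :=
  \sum_(i < size p) p`_i *: iter i mulT q.

Definition is_seval (P : {poly K}) (a r : K) : Prop :=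
  exists Q : {poly K}, P = spmul Q ('X - a%:P) + r%:P.
Definition seval (P : {poly K}) (a : K) : K :=
  epsilon (inhabits (0 : K)) (is_seval P a).

Definition sact (b a : K) : K := sigma b * a * b^-1 + delta b * b^-1.

Definition Delta (a : K) : K -> Prop := fun c => exists2 b : K, b != 0 & c = sact b a.

(* skew product of functions Z -> K (functions represented on all of K,
   only their values on Z matter) *)
Definition skew_prod (f g : K -> K) (z : K) : K :=
  if g z != 0 then f (sact (g z) z) * g z else 0.

Definition skew_invertible (Z : K -> Prop) (f : K -> K) : Prop :=
  exists g : K -> K, forall z, Z z -> skew_prod f g z = 1 /\ skew_prod g f z = 1.

(* Equality of left fractions P^{-1} Q = P'^{-1} Q' in the division ring of left
   fractions K(T;sigma,delta) (Ore condition): u P = v P' <> 0 and u Q = v Q'. *)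
Definition lfrac_eq (P Q P' Q' : {poly K}) : Prop :=
  exists u v : {poly K},
    [/\ spmul u P = spmul v P', spmul u P != 0 & spmul u Q = spmul v Q'].

Definition minimal_lrep (P Q P0 Q0 : {poly K}) : Prop :=
  [/\ lfrac_eq P Q P0 Q0, P \is monic &
      forall P' Q', lfrac_eq P' Q' P0 Q0 -> P' \is monic -> (size P <= size P')%N].

Definition defined_at (P0 Q0 : {poly K}) (a : K) : Prop :=
  forall P Q, minimal_lrep P Q P0 Q0 -> skew_invertible (Delta a) (fun c => seval P c).

End SkewPoly.

From HB Require Import structures.
From mathcomp Require Import all_boot all_order all_algebra.
From Stdlib Require Import ClassicalEpsilon FunctionalExtensionality.
Import GRing.Theory.
Local Open Scope ring_scope.

(* The minimal left representation of (T - d)^-1 is (T - d)^-1 1 itself, and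
   (T - d)(z) = z - d; hence "(T - d)^-1 is defined at a" says exactly that the function
   z |-> z - d is skew invertible on Delta(a).  Writing d = ^e b, one computes
       z - ^e b = sigma(e) (^(e^-1) z - b) e^-1,
   so the function attached to d is the twist z |-> p F(^q z) q of the function F attached
   to b, with p = sigma(e), q = e^-1.  Twisting is compatible with the skew product of
   functions, so twists of skew invertible functions stay skew invertible on every set
   stable under the action, such as Delta(a).  Finally Delta(c) is contained in Delta(a). *)

Section SkewPolynomials.
Context {K : unitRingType} (Kdiv : forall x : K, x != 0 -> x \is a GRing.unit).
Context {sigma : {rmorphism K -> K}} {delta : K -> K}.
Context (delta_add : forall x y : K, delta (x + y) = delta x + delta y).
Context (delta_mul : forall x y : K, delta (x * y) = sigma x * delta y + delta x * y).

Implicit Types (p q u : {poly K}) (x y : K).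

Local Notation Tmul := (mulT sigma delta).
Local Notation "p ** q" := (spmul sigma delta p q) (at level 40, left associativity).

Lemma delta0 : delta 0 = 0.
Proof. by apply: (addrI (delta 0)); rewrite -delta_add !addr0. Qed.

Lemma delta1 : delta 1 = 0.
Proof.
have := delta_mul 1 1; rewrite !mulr1 rmorph1 mul1r => delta_11.
by apply: (addrI (delta 1)); rewrite -delta_11 addr0.
Qed.

Lemma unit_neq0 {x : K} : x \is a GRing.unit -> x != 0.
Proof. by apply: contraTneq => ->; rewrite unitr0. Qed.

Lemma mul_neq0 {x y : K} : x != 0 -> y != 0 -> x * y != 0.
Proof. by move=> /Kdiv x_unit /Kdiv y_unit; apply: unit_neq0; rewrite unitrMl. Qed.

Lemma inv_neq0 {x : K} : x != 0 -> x^-1 != 0.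
Proof. by move=> /Kdiv x_unit; apply: unit_neq0; rewrite unitrV. Qed.

Lemma sigma_neq0 {x : K} : x != 0 -> sigma x != 0.
Proof. by move=> /Kdiv /(rmorph_unit sigma) /unit_neq0. Qed.

Lemma coef_Tmul p i : (Tmul p)`_i = (if i == 0%N then 0 else sigma p`_i.-1) + delta p`_i.
Proof. by rewrite /mulT coefD coefMX (coef_map_id0 _ _ delta0) coef_map. Qed.

Lemma TmulD p q : Tmul (p + q) = Tmul p + Tmul q.
Proof.
apply/polyP => i; rewrite coefD !coef_Tmul !coefD rmorphD delta_add.
by case: (i == 0%N); rewrite ?add0r // addrACA.
Qed.

Lemma Tmul0 : Tmul 0 = 0.
Proof. by apply: (addrI (Tmul 0)); rewrite -TmulD !addr0. Qed.

Lemma TmulB p q : Tmul (p - q) = Tmul p - Tmul q.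
Proof.
suff TmulN r : Tmul (- r) = - Tmul r by rewrite TmulD TmulN.
by apply: (addrI (Tmul r)); rewrite -TmulD !subrr Tmul0.
Qed.

Lemma TmulZ a p : Tmul (a *: p) = sigma a *: Tmul p + delta a *: p.
Proof.
apply/polyP => i; rewrite coef_Tmul coefD !coefZ coef_Tmul delta_mul.
by case: (i == 0%N); rewrite ?mulr0 ?add0r // rmorphM mulrDr addrA.
Qed.

Lemma iter_TmulB i p q : iter i Tmul (p - q) = iter i Tmul p - iter i Tmul q.
Proof. by elim: i => //= i ->; rewrite TmulB. Qed.

Lemma iter_Tmul_Xn i : iter i Tmul 1 = 'X^i.
Proof.
elim: i => //= i ->; apply/polyP => j; rewrite coef_Tmul !coefXn.
case: j => [|j] /=; first by rewrite add0r; case: (0%N == i); rewrite ?delta1 ?delta0.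
by case: (j.+1 == i); rewrite ?delta1 ?delta0 addr0 eqSS; case: (j == i); rewrite ?rmorph1 ?rmorph0.
Qed.

Lemma spmul_widen n p q : (size p <= n)%N -> p ** q = \sum_(i < n) p`_i *: iter i Tmul q.
Proof.
move=> size_p; rewrite /spmul (big_ord_widen n (fun i => p`_i *: iter i Tmul q) size_p).
rewrite big_mkcond; apply: eq_bigr => i _.
by case: ltnP => // le_p_i; rewrite nth_default // scale0r.
Qed.

Lemma spmul0l q : 0 ** q = 0.
Proof. by rewrite /spmul size_poly0 big_ord0. Qed.

Lemma spmulDl p p' q : (p + p') ** q = p ** q + p' ** q.
Proof.
set n := maxn (size p) (size p').
rewrite !(spmul_widen n) ?leq_maxl ?leq_maxr ?(leq_trans (size_polyD _ _)) //.
by rewrite -big_split; apply: eq_bigr => i _; rewrite coefD scalerDl.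
Qed.

Lemma spmulBl p p' q : (p - p') ** q = p ** q - p' ** q.
Proof.
suff spmulNl r : (- r) ** q = - (r ** q) by rewrite spmulDl spmulNl.
by apply: (addrI (r ** q)); rewrite -spmulDl !subrr spmul0l.
Qed.

Lemma spmulZl a p q : (a *: p) ** q = a *: (p ** q).
Proof.
rewrite !(spmul_widen (size p)) ?size_scale_leq // scaler_sumr.
by apply: eq_bigr => i _; rewrite coefZ scalerA.
Qed.

Lemma spmulBr p q q' : p ** (q - q') = p ** q - p ** q'.
Proof. by rewrite /spmul -sumrB; apply: eq_bigr => i _; rewrite iter_TmulB scalerBr. Qed.

Lemma spmulCl a q : a%:P ** q = a *: q.
Proof. by rewrite (spmul_widen 1) ?size_polyC ?leq_b1 // big_ord1 coefC. Qed.

Lemma spmul1l q : 1 ** q = q.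
Proof. by rewrite -polyC1 spmulCl scale1r. Qed.

Lemma spmulr1 p : p ** 1 = p.
Proof.
rewrite /spmul -[RHS]coefK poly_def.
by apply: eq_bigr => i _; rewrite iter_Tmul_Xn.
Qed.

Lemma spmul_sum n (F : 'I_n -> {poly K}) q :
  (\sum_(i < n) F i) ** q = \sum_(i < n) (F i ** q).
Proof. exact: (big_morph (spmul sigma delta ^~ q) (fun p p' => spmulDl p p' q) (spmul0l q)). Qed.

Lemma spmul_Tmul p q : Tmul p ** q = Tmul (p ** q).
Proof.
set m := size p.
have size_Tp : (size (Tmul p) <= m.+1)%N.
  apply/leq_sizeP => -[|j] //= lt_m_j; rewrite coef_Tmul /=.
  by rewrite !nth_default ?rmorph0 ?delta0 ?addr0 // ltnW // ltnW.
rewrite (spmul_widen _ _ q size_Tp) (spmul_widen _ _ q (leqnSn m)).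
rewrite (big_morph Tmul TmulD Tmul0).
under [in LHS]eq_bigr => i _ do rewrite coef_Tmul scalerDl.
under [in RHS]eq_bigr => i _ do rewrite TmulZ.
rewrite !big_split /=; congr (_ + _).
rewrite big_ord_recl /= scale0r add0r big_ord_recr /= nth_default // rmorph0 scale0r addr0.
by apply: eq_bigr.
Qed.

Lemma spmul_iter i p q : iter i Tmul p ** q = iter i Tmul (p ** q).
Proof. by elim: i => //= i <-; rewrite spmul_Tmul. Qed.

Lemma spmulA p q (r : {poly K}) : (p ** q) ** r = p ** (q ** r).
Proof.
have -> : p ** q = \sum_(i < size p) p`_i *: iter i Tmul q by [].
rewrite spmul_sum [RHS]/spmul.
by apply: eq_bigr => i _; rewrite spmulZl spmul_iter.
Qed.

(* Degrees add up: multiplication by T raises the degree by one since sigma is injective. *)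
Lemma size_Tmul p : p != 0 -> size (Tmul p) = (size p).+1.
Proof.
move=> p_nz; have size_sp : size (map_poly sigma p) = size p.
  by apply: size_map_poly_id0; apply: sigma_neq0; rewrite lead_coef_eq0.
have size_spX : size (map_poly sigma p * 'X) = (size p).+1.
  by rewrite size_mulX ?size_sp // -size_poly_eq0 size_sp size_poly_eq0.
have size_dp : (size (map_poly delta p) <= size p)%N.
  by apply/leq_sizeP => j le_p_j; rewrite (coef_map_id0 _ _ delta0) nth_default ?delta0.
by rewrite /mulT size_polyDl size_spX // ltnS.
Qed.

Lemma size_iter_Tmul i p : p != 0 -> size (iter i Tmul p) = (size p + i)%N.
Proof.
move=> p_nz; elim: i => [|i IH] /=; first by rewrite addn0.
have iter_nz : iter i Tmul p != 0.
  by rewrite -size_poly_eq0 IH addn_eq0 size_poly_eq0 (negbTE p_nz).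
by rewrite size_Tmul // IH addnS.
Qed.

Lemma size_spmul {p q} : p != 0 -> q != 0 -> size (p ** q) = (size p + size q).-1.
Proof.
move=> p_nz q_nz; have q_gt0 : (0 < size q)%N by rewrite size_poly_gt0.
have [m size_p] : {m | size p = m.+1} by exists (size p).-1; rewrite prednK ?size_poly_gt0.
have lead_p : p`_m = lead_coef p by rewrite lead_coefE size_p.
have size_top : size (p`_m *: iter m Tmul q) = (size q + m)%N.
  by rewrite lreg_size ?size_iter_Tmul // lead_p; apply/mulrI/Kdiv; rewrite lead_coef_eq0.
have size_low : (size (\sum_(i < m) p`_i *: iter i Tmul q)%R < size q + m)%N.
  apply: (big_ind (fun r : {poly K} => size r < size q + m)%N).
  - by rewrite size_poly0 addn_gt0 q_gt0.
  - by move=> r r' r_lt r'_lt; apply: (leq_ltn_trans (size_polyD _ _)); rewrite gtn_max r_lt.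
  - move=> i _; apply: (leq_ltn_trans (size_scale_leq _ _)).
    by rewrite size_iter_Tmul // ltn_add2l.
by rewrite /spmul size_p big_ord_recr /= addrC size_polyDl size_top // addnC.
Qed.

Lemma spmul_cancel {u q q'} : u != 0 -> u ** q = u ** q' -> q = q'.
Proof.
move=> u_nz uq_eq; apply/eqP; rewrite -subr_eq0; apply: contraT => qq'_nz.
have := size_spmul u_nz qq'_nz; rewrite spmulBr uq_eq subrr size_poly0.
move: u_nz qq'_nz; rewrite -!size_poly_gt0.
by case: (size u) => // n _; case: (size _) => // k _; rewrite addnS.
Qed.

Lemma is_seval_uniq {P z r r'} :
  is_seval sigma delta P z r -> is_seval sigma delta P z r' -> r = r'.
Proof.
case=> Q PQ [Q' PQ'].
have diff : (Q' - Q) ** ('X - z%:P) = (r - r')%:P.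
  rewrite spmulBl; have -> : Q ** ('X - z%:P) = P - r%:P by rewrite PQ addrK.
  have -> : Q' ** ('X - z%:P) = P - r'%:P by rewrite PQ' addrK.
  by rewrite polyCB opprB addrC addrA subrK.
have [QQ'|QQ'_nz] := eqVneq (Q' - Q) 0.
  by move: diff; rewrite QQ' spmul0l => /esym/eqP; rewrite polyC_eq0 subr_eq0 => /eqP.
have := size_spmul QQ'_nz (monic_neq0 (monicXsubC z)).
rewrite diff size_XsubC addn2 /= => size_c.
by have := size_polyC_leq1 (r - r'); rewrite size_c ltnS leqn0 size_poly_eq0 (negbTE QQ'_nz).
Qed.

Lemma seval_spec P z r : is_seval sigma delta P z r -> seval sigma delta P z = r.
Proof. by move=> Pzr; apply: (is_seval_uniq _ Pzr); apply: epsilon_spec; exists r. Qed.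

Lemma seval_XsubC e z : seval sigma delta ('X - e%:P) z = z - e.
Proof. by apply: seval_spec; exists 1; rewrite spmul1l polyCB addrA subrK. Qed.

Lemma lfrac_eq_refl {P} Q : P != 0 -> lfrac_eq sigma delta P Q P Q.
Proof. by exists 1, 1; rewrite spmul1l. Qed.

Lemma lfrac_XsubC {d P Q} : lfrac_eq sigma delta P Q ('X - d%:P) 1 -> P \is monic ->
  [/\ P = Q ** ('X - d%:P), Q != 0 & size P = (size Q).+1].
Proof.
case=> u [v] [uP_eq uP_nz]; rewrite spmulr1 => uQ_eq P_monic.
have u_nz : u != 0 by apply: contraNneq uP_nz => ->; rewrite spmul0l.
have PQ : P = Q ** ('X - d%:P) by apply: (spmul_cancel u_nz); rewrite uP_eq -uQ_eq spmulA.
have Q_nz : Q != 0.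
  by apply: contraTneq P_monic => Q0; rewrite PQ Q0 spmul0l monicE lead_coef0 eq_sym oner_eq0.
by split=> //; rewrite PQ (size_spmul Q_nz (monic_neq0 (monicXsubC d))) size_XsubC addn2.
Qed.

Lemma minimal_lrep_XsubC d P Q :
  minimal_lrep sigma delta P Q ('X - d%:P) 1 <-> P = 'X - d%:P /\ Q = 1.
Proof.
split=> [[frac P_monic P_min] | [-> ->]].
- have [PQ Q_nz size_P] := lfrac_XsubC frac P_monic.
  have size_Q : size Q = 1%N.
    apply/anti_leq; rewrite size_poly_gt0 Q_nz andbT -ltnS -size_P.
    have := P_min _ _ (lfrac_eq_refl 1 (monic_neq0 (monicXsubC d))) (monicXsubC d).
    by rewrite size_XsubC.
  have [q Qq] : {q | Q = q%:P} by exists Q`_0; apply: size1_polyC; rewrite size_Q.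
  have Pq : P = q *: ('X - d%:P) by rewrite PQ Qq spmulCl.
  have q1 : q = 1.
    move/monicP: P_monic; rewrite lead_coefE size_P size_Q Pq coefZ.
    by rewrite coefB coefX coefC /= subr0 mulr1.
  by rewrite Pq Qq q1 scale1r.
- split; [exact: (lfrac_eq_refl _ (monic_neq0 (monicXsubC d))) | exact: monicXsubC |].
  move=> P' Q' frac P'_monic; have [_ Q'_nz ->] := lfrac_XsubC frac P'_monic.
  by rewrite size_XsubC ltnS size_poly_gt0.
Qed.

(* Since (T - d)^-1 has minimal representation (T - d)^-1 1 and (T - d)(z) = z - d,
   "(T - d)^-1 is defined at a" means that z |-> z - d is skew invertible on Delta(a). *)
Lemma defined_at_XsubC d a :
  defined_at sigma delta ('X - d%:P) 1 a <->
  skew_invertible sigma delta (Delta sigma delta a) (fun z => z - d).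
Proof.
have eval : (fun z => seval sigma delta ('X - d%:P) z) = (fun z => z - d).
  by apply: functional_extensionality => z; apply: seval_XsubC.
split=> [defined | inv P Q /minimal_lrep_XsubC [-> _]]; last by rewrite eval.
by rewrite -eval; apply: defined; apply/minimal_lrep_XsubC.
Qed.

Local Notation act := (sact sigma delta).

Lemma sact1 z : act 1 z = z.
Proof. by rewrite /sact rmorph1 delta1 invr1 mul1r !mulr1 addr0. Qed.

Lemma sactM x y z : x != 0 -> y != 0 -> act x (act y z) = act (x * y) z.
Proof.
move=> /Kdiv x_unit /Kdiv y_unit; rewrite /sact rmorphM delta_mul invrM //.
by rewrite !mulrDr !mulrDl !mulrA (mulrK y_unit) addrA.
Qed.

Lemma Delta_sact a x z : x != 0 -> Delta sigma delta a z -> Delta sigma delta a (act x z).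
Proof. by move=> x_nz [y y_nz ->]; exists (x * y); rewrite ?mul_neq0 ?sactM. Qed.

Lemma Delta_trans {a c} :
  Delta sigma delta a c -> forall z, Delta sigma delta c z -> Delta sigma delta a z.
Proof. by move=> ac z [y y_nz ->]; apply: Delta_sact. Qed.

Definition twist (p q : K) (f : K -> K) : K -> K := fun z => p * f (act q z) * q.

Lemma skew_prod_twist (p q : K) (f g : K -> K) z : p != 0 -> q != 0 ->
  skew_prod sigma delta (twist p q f) (twist q^-1 p^-1 g) z =
  p * skew_prod sigma delta f g (act p^-1 z) * p^-1.
Proof.
move=> p_nz q_nz; set w := act p^-1 z; rewrite /skew_prod /twist -/w.
have [g0|g_nz] := eqVneq (g w) 0; first by rewrite g0 mulr0 mul0r eqxx /= mulr0 mul0r.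
have gw_nz : q^-1 * g w * p^-1 != 0 by rewrite !mul_neq0 ?inv_neq0.
rewrite gw_nz /=.
have -> : act q (act (q^-1 * g w * p^-1) z) = act (g w) w.
  by rewrite /w !sactM ?mul_neq0 ?inv_neq0 // !mulrA mulrV ?Kdiv // mul1r.
by rewrite !mulrA (mulrK (Kdiv _ q_nz)).
Qed.

Lemma skew_invertible_twist {Z : K -> Prop} {f : K -> K} {p q : K} :
  (forall x z, x != 0 -> Z z -> Z (act x z)) -> p != 0 -> q != 0 ->
  skew_invertible sigma delta Z f -> skew_invertible sigma delta Z (twist p q f).
Proof.
move=> Z_stable p_nz q_nz [g fg_inv]; exists (twist q^-1 p^-1 g) => z Zz.
have [fg1 _] := fg_inv _ (Z_stable _ _ (inv_neq0 p_nz) Zz).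
have [_ gf1] := fg_inv _ (Z_stable _ _ q_nz Zz).
split; first by rewrite skew_prod_twist // fg1 mulr1 mulrV ?Kdiv.
rewrite -{2}[p]invrK -{2}[q]invrK skew_prod_twist ?inv_neq0 // invrK gf1.
by rewrite mulr1 mulVr ?Kdiv.
Qed.

Lemma skew_invertible_sub {Z Z' : K -> Prop} {f : K -> K} : (forall z, Z' z -> Z z) ->
  skew_invertible sigma delta Z f -> skew_invertible sigma delta Z' f.
Proof. by move=> Z'Z [g fg_inv]; exists g => z /Z'Z; apply: fg_inv. Qed.

Lemma XsubC_sact_twist e b :
  e != 0 -> (fun z => z - act e b) = twist (sigma e) e^-1 (fun z => z - b).
Proof.
move=> e_nz; apply: functional_extensionality => z; rewrite /twist /sact.
rewrite -[z in LHS](sact1 z) -(mulrV (Kdiv _ e_nz)) -sactM ?inv_neq0 //.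
by rewrite {1}/sact mulrBr mulrBl opprD addrACA subrr addr0.
Qed.

End SkewPolynomials.

Theorem proposition3p3
  (K : unitRingType)
  (Kdiv : forall x : K, x != 0 -> x \is a GRing.unit)
  (sigma : {rmorphism K -> K})
  (delta : K -> K)
  (delta_add : forall x y : K, delta (x + y) = delta x + delta y)
  (delta_mul : forall x y : K, delta (x * y) = sigma x * delta y + delta x * y)
  (a b c d : K) :
  Delta sigma delta a c -> Delta sigma delta b d ->
  defined_at sigma delta ('X - b%:P) 1 a ->
  defined_at sigma delta ('X - d%:P) 1 c.
Proof.
move=> ac [e e_nz ->].
rewrite !(defined_at_XsubC Kdiv delta_add delta_mul) (XsubC_sact_twist Kdiv delta_mul) // => inv_b.
apply: (skew_invertible_sub (Delta_trans Kdiv delta_mul ac)).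
apply: skew_invertible_twist inv_b => //.
- by move=> x z; apply: Delta_sact.
- exact: sigma_neq0.
- exact: inv_neq0.
Qed.
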